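(* Let $G$ be a finite abelian group such that $G$ is not isomorphic to $C_2^2$ (the Klein four-group). Then $\operatorname{Aut}(\mathcal{P}_{0}(G))\simeq \operatorname{Aut}(G)$.
   Context: For an additively written finite abelian group $G$, the reduced power monoid $\mathcal{P}_{0}(G)$ is the set of all subsets of $G$ containing $0$, with the operation of setwise addition $X+Y=\{x+y : x\in X, y\in Y\}$ and identity $\{0\}$. $\operatorname{Aut}$ denotes the group of monoid (resp. group) automorphisms. $C_n$ denotes the cyclic group of order $n$. (In the paper, the isomorphism arises from the canonical embedding $\operatorname{Aut}(G)\to\operatorname{Aut}(\mathcal{P}_0(G))$, $h\mapsto F_h$, where $F_h(X)=\{h(x):x\in X\}$.) *)

From mathcomp Require Import all_boot all_algebra.
Set Implicit Arguments. Unset Strict Implicit. Unset Printing Implicit Defensive.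
Import GRing.Theory.
Local Open Scope ring_scope.

Definition setadd (G : finZmodType) (X Y : {set G}) : {set G} :=
  [set x + y | x in X, y in Y].

Definition P0 (G : finZmodType) := {X : {set G} | (0 : G) \in X}.

Lemma setadd_P0 (G : finZmodType) (X Y : P0 G) :
  (0 : G) \in setadd (val X) (val Y).
Proof.
apply/imset2P; exists 0 0; [exact: (valP X) | exact: (valP Y) | by rewrite addr0].
Qed.

Definition P0add (G : finZmodType) (X Y : P0 G) : P0 G :=
  exist _ (setadd (val X) (val Y)) (setadd_P0 X Y).

Definition P0one (G : finZmodType) : P0 G :=
  exist _ [set (0 : G)] (set11 (0 : G)).

Definition P0_monoid_aut (G : finZmodType) (phi : P0 G -> P0 G) : Prop :=
  [/\ bijective phi,
      forall X Y : P0 G, phi (P0add X Y) = P0add (phi X) (phi Y)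
    & phi (P0one G) = P0one G].

Definition group_aut (G : finZmodType) (h : G -> G) : Prop :=
  bijective h /\ {morph h : x y / x + y}.

Definition group_isomorphic (G H : finZmodType) : Prop :=
  exists f : G -> H, bijective f /\ {morph f : x y / x + y}.

Definition Klein4 : finZmodType := 'rV['Z_2]_2.

From mathcomp Require Import all_boot all_algebra.
From Stdlib Require Import FunctionalExtensionality.
Set Implicit Arguments. Unset Strict Implicit. Unset Printing Implicit Defensive.
Import GRing.Theory.
Local Open Scope ring_scope.

(* The sets G \ {y}, together with G itself, are exactly the X in P_0(G) with
   X + Y = G for every Y <> {0}; so an automorphism phi permutes them, which
   defines a permutation sigma = pointmap phi of G with
   phi (G \ {y}) = G \ {sigma y}.
   Call X aperiodic if its stabiliser {t | X + t = X} is trivial.  For such X,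
   y lies outside X iff X + Z = G \ {y} for some Z, and phi preserves
   aperiodicity, hence phi X = sigma X.  Transporting the identity
   A + Z = G \ {y} along phi for the aperiodic sets A = {0, a} (2a <> 0) and
   A = {0, a, c} shows that sigma is additive; when G is an elementary abelian
   2-group, the extra element c comes from G not being C_2^2.
   Then psi = sigma^-1 o phi is an injective endomorphism fixing every
   aperiodic set.  Each X is A + H with A aperiodic and H = stab X a subgroup,
   and psi fixes subgroups: one of order > 2 is the union of its aperiodic
   subsets, while for H = {0, k} and psi H = {0, s} with s <> k, comparing
   psi({0,a,k} + H) and psi({0,a+k,k} + H) forces G = {0, k, s, k + s}. *)

Lemma addr_eql (V : zmodType) (x y : V) : (x + y == x) = (y == 0).
Proof. by rewrite -[X in _ == X]addr0 (inj_eq (addrI x)). Qed.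

Lemma addr_eqr (V : zmodType) (x y : V) : (x + y == y) = (x == 0).
Proof. by rewrite addrC addr_eql. Qed.

Section SetAdd.
Variable G : finZmodType.
Implicit Types (A B H S T X Y Z : {set G}) (a b c k s t x y z : G).

Lemma mem_setadd A B x y : x \in A -> y \in B -> x + y \in setadd A B.
Proof. exact: imset2_f. Qed.

Lemma setaddC A B : setadd A B = setadd B A.
Proof.
by apply/setP => z; apply/imset2P/imset2P => -[x y xA yB ->]; exists y x; rewrite // addrC.
Qed.

Definition stab S := [set t | [forall x in S, x + t \in S]].

Lemma stabP S t : reflect {in S, forall x, x + t \in S} (t \in stab S).
Proof. by rewrite inE; apply: forall_inP. Qed.

Lemma stab0 S : 0 \in stab S.
Proof. by apply/stabP => x; rewrite addr0. Qed.

Lemma stab_sub S : 0 \in S -> stab S \subset S.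
Proof. by move=> S0; apply/subsetP => t /stabP /(_ 0 S0); rewrite add0r. Qed.

Lemma setadd_stabl S Y : 0 \in Y -> (setadd S Y == S) = (Y \subset stab S).
Proof.
move=> Y0; apply/eqP/subsetP => [SY y yY|sYS].
  apply/stabP; rewrite -{1}SY => _ /imset2P[x y' xS y'Y ->].
  by rewrite -SY mem_setadd // -SY mem_setadd.
apply/setP => z; apply/imset2P/idP => [[x y xS yY ->]|zS].
  by move/sYS/stabP: yY => /(_ x xS).
by exists z 0; rewrite ?addr0.
Qed.

Lemma stab_idem T : 0 \in T -> setadd T T = T -> stab T = T.
Proof.
move=> T0 TT; apply/eqP; rewrite eqEsubset stab_sub //=.
by rewrite -setadd_stabl // TT.
Qed.

Lemma setadd_stab S : setadd (stab S) (stab S) = stab S.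
Proof.
apply/eqP; rewrite setadd_stabl ?stab0 //; apply/subsetP => t /stabP tS.
by apply/stabP => u /stabP uS; apply/stabP => x xS; rewrite addrA tS ?uS.
Qed.

Definition aperiodic S := stab S \subset [set 0].

Lemma aperiodicP S :
  reflect (forall t, t != 0 -> exists2 x, x \in S & x + t \notin S) (aperiodic S).
Proof.
apply: (iffP subsetP) => [aS t t0|aS t].
  apply/exists_inP; rewrite -negb_forall_in; apply: contra t0 => /forall_inP tS.
  by rewrite -in_set1 aS // inE; apply/forall_inP.
by rewrite in_set1; apply: contraTT => /aS[x xS /negP xtS]; apply/stabP => /(_ x xS).
Qed.

Lemma aperiodic3 a c : a + c \notin [set 0; a; c] -> aperiodic [set 0; a; c].
Proof.
move=> acS; have S0 : 0 \in [set 0; a; c] by rewrite !inE eqxx.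
apply/subsetP => t tS; move/stabP: (tS) => tSS.
have /(subsetP (stab_sub S0)) := tS; rewrite !inE -!orbA => /or3P[//|/eqP ta|/eqP tc].
  by case/negP: acS; rewrite ta in tSS; rewrite addrC tSS // !inE eqxx !orbT.
by case/negP: acS; rewrite tc in tSS; rewrite tSS // !inE eqxx !orbT.
Qed.

Lemma aperiodic2 a : a + a != 0 -> aperiodic [set 0; a].
Proof.
move=> aa; have := @aperiodic3 a a; rewrite -setUA setUid; apply.
rewrite !inE (negbTE aa) addr_eql /=.
by apply: contra aa => /eqP->; rewrite addr0.
Qed.

Lemma aperiodic_setC1 y : aperiodic [set~ y].
Proof.
apply/aperiodicP => t t0; exists (y - t); last by rewrite subrK setC11.
by rewrite !inE -subr_eq0 addrC addKr oppr_eq0.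
Qed.

Lemma stab_setaddr A Z : stab Z \subset stab (setadd A Z).
Proof.
apply/subsetP => t /stabP tZ; apply/stabP => _ /imset2P[x z xA zZ ->].
by rewrite -addrA mem_setadd ?tZ.
Qed.

Lemma aperiodic_setaddr A Z : aperiodic (setadd A Z) -> aperiodic Z.
Proof. exact: subset_trans (stab_setaddr A Z). Qed.

Definition residual S y := 0 |: [set z | y - z \notin S].

Lemma setadd_residual S y : aperiodic S -> y \notin S ->
  setadd S (residual S y) = [set~ y].
Proof.
move=> aS yS; apply/setP => w; rewrite !inE; apply/imset2P/idP.
  move=> [x z xS]; rewrite !inE => /predU1P[-> ->|yzS ->].
    by rewrite addr0; apply: contraNneq yS => <-.
  by apply: contraNneq yzS => <-; rewrite addrK.
move=> wy; have [|x xS xwyS] := aperiodicP _ aS (y - w); first by rewrite subr_eq0 eq_sym.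
by exists x (w - x); rewrite ?subrKC // !inE opprB addrCA xwyS orbT.
Qed.


Definition aperiodic_part X := 0 |: (X :\: stab X).

Lemma aperiodic_part_sub X : 0 \in X -> aperiodic_part X \subset X.
Proof. by move=> X0; apply/subsetP => x; rewrite !inE => /predU1P[->|/andP[]]. Qed.

Lemma setadd_aperiodic_part X : 0 \in X -> setadd (aperiodic_part X) (stab X) = X.
Proof.
move=> X0; apply/setP => z; apply/imset2P/idP => [[x t xA tK ->]|zX].
  move: xA; rewrite !inE => /predU1P[->|/andP[_ xX]]; last by move/stabP: tK; apply.
  by rewrite add0r (subsetP (stab_sub X0)).
case: (boolP (z \in stab X)) => zK; first by exists 0 z; rewrite ?add0r ?setU11.
by exists z 0; rewrite ?addr0 ?stab0 // in_setU1 in_setD zK zX orbT.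
Qed.

Lemma aperiodic_aperiodic_part X : 0 \in X -> aperiodic (aperiodic_part X).
Proof.
move=> X0; have A0 : 0 \in aperiodic_part X by rewrite setU11.
apply/subsetP => t tA; move/stabP: (tA) => tAA; rewrite inE.
apply: contraT => t0; have /(subsetP (stab_sub A0)) := tA.
rewrite in_setU1 in_setD (negbTE t0) /= => /andP[tK tX].
case/negP: tK; apply/stabP => x xX.
case: (boolP (x \in stab X)) => [/stabP xK|xK]; first by rewrite addrC xK.
by apply: (subsetP (aperiodic_part_sub X0)); rewrite tAA // in_setU1 in_setD xK xX orbT.
Qed.

Lemma idem_card_le2 H : 0 \in H -> setadd H H = H -> (#|H| <= 2)%N ->
  exists k, H = [set 0; k] /\ k + k = 0.
Proof.
move=> H0 HH; case: (pickP [pred k | (k \in H) && (k != 0)]) => [k /andP[kH k0]|none] cardH.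
  have eH : H = [set 0; k].
    apply/eqP; rewrite eq_sym eqEcard cards2 eq_sym k0 cardH andbT.
    by apply/subsetP => z; rewrite !inE => /predU1P[->|/eqP->].
  exists k; split => //; have := mem_setadd kH kH; rewrite HH eH !inE => /predU1P[//|/eqP kkk].
  by case/eqP: k0; apply: (addrI k); rewrite kkk addr0.
exists 0; rewrite addr0 setUid; split => //; apply/setP => z; rewrite inE.
by apply/idP/eqP => [zH|->//]; apply/eqP; move: (none z) => /=; rewrite zH => /negbFE.
Qed.

Lemma idem_cover_aperiodic H x : 0 \in H -> setadd H H = H -> (2 < #|H|)%N -> x \in H ->
  exists A, [/\ 0 \in A, aperiodic A, A \subset H & x \in A].
Proof.
move=> H0 HH cardH xH; have HHsub := mem_setadd (A := H) (B := H); rewrite HH in HHsub.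
case: (eqVneq x 0) => [->|x0].
  by exists [set 0]; split; rewrite ?set11 ?sub1set //; apply: stab_sub; rewrite set11.
case: (eqVneq (x + x) 0) => xx; last first.
  exists [set 0; x]; split; rewrite ?set21 ?set22 ?aperiodic2 //.
  by apply/subsetP => z; rewrite !inE => /predU1P[->|/eqP->].
have [c cH] : exists2 c, c \in H & c \notin [set 0; x].
  apply/subsetPn; apply: contraTN cardH => /subset_leq_card.
  by rewrite cards2 eq_sym x0 -leqNgt.
rewrite !inE negb_or => /andP[c0 cx]; exists [set 0; x; c]; split.
- by rewrite !inE eqxx.
- apply: aperiodic3; rewrite !inE addr_eql addr_eqr (negbTE c0) (negbTE x0) !orbF.
  by rewrite -xx (inj_eq (addrI x)).
- by apply/subsetP => z; rewrite !inE -orbA => /or3P[] /eqP->.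
- by rewrite !inE eqxx orbT.
Qed.

Lemma idem_sub_of_aperiodic H T : 0 \in H -> setadd H H = H -> (2 < #|H|)%N ->
  (forall A, 0 \in A -> aperiodic A -> A \subset H -> A \subset T) -> H \subset T.
Proof.
move=> H0 HH cardH sub; apply/subsetP => x xH.
have [A [A0 aA AH xA]] := idem_cover_aperiodic H0 HH cardH xH.
exact: subsetP (sub A A0 aA AH) x xA.
Qed.

Lemma setadd_set3_set2 a b c :
  setadd [set 0; a; b] [set 0; c] = [set 0; a; b; c; a + c; b + c].
Proof.
apply/setP => w; apply/imset2P/idP.
  move=> [u v]; rewrite !inE -!orbA => /or3P[]/eqP-> /orP[]/eqP-> ->;
  by rewrite ?addr0 ?add0r eqxx ?orbT.
rewrite !inE -!orbA => /or4P[/eqP->|/eqP->|/eqP->|/or3P[]/eqP->].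
- by exists 0 0; rewrite ?addr0 ?inE ?eqxx.
- by exists a 0; rewrite ?addr0 ?inE ?eqxx ?orbT.
- by exists b 0; rewrite ?addr0 ?inE ?eqxx ?orbT.
- by exists 0 c; rewrite ?add0r ?inE ?eqxx ?orbT.
- by exists a c; rewrite ?inE ?eqxx ?orbT.
- by exists b c; rewrite ?inE ?eqxx ?orbT.
Qed.
End SetAdd.

Lemma imset_setadd (G H : finZmodType) (f : G -> H) (A B : {set G}) :
  {morph f : x y / x + y} -> f @: setadd A B = setadd (f @: A) (f @: B).
Proof.
move=> fD; apply/setP => z; apply/imsetP/imset2P.
  by move=> [_ /imset2P[x y xA yB ->] ->]; rewrite fD; exists (f x) (f y); rewrite ?imset_f.
by move=> [_ _ /imsetP[x xA ->] /imsetP[y yB ->] ->]; exists (x + y); rewrite ?fD ?mem_setadd.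
Qed.

Lemma mulrn_mod2 (V : zmodType) (u : V) n : u + u = 0 -> u *+ (n %% 2) = u *+ n.
Proof.
move=> uu; rewrite -mulr2n in uu.
by rewrite {2}(divn_eq n 2) mulrnDr mulnC mulrnA uu mul0rn add0r.
Qed.

Lemma Klein4_witness (G : finZmodType) (u v : G) : ~ group_isomorphic G Klein4 ->
  u + u = 0 -> v + v = 0 -> u != 0 -> v != 0 -> u != v ->
  exists x, x \notin [set 0; u; v; u + v].
Proof.
move=> notK uu vv u0 v0 uv.
case: (pickP [pred x | x \notin [set 0; u; v; u + v]]) => [x xN|inUV]; first by exists x.
case: notK; pose f (m : Klein4) : G := u *+ m 0 0 + v *+ m 0 1.
have Z2D (i j : 'Z_2) : (i + j)%R = ((i + j) %% 2)%N :> nat by [].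
have fD : {morph f : m m' / m + m'}.
  move=> m m'; rewrite /f !mxE !Z2D (mulrn_mod2 _ uu) (mulrn_mod2 _ vv).
  by rewrite !mulrnDr addrACA.
have Z2 (i : 'Z_2) : i = 0 \/ i = 1.
  by case: i => [[|[|//]] ?]; [left | right]; apply: val_inj.
have f_ker m : f m = 0 -> m = 0.
  have uv0 : u + v != 0 by rewrite -uu (inj_eq (addrI u)) eq_sym.
  rewrite /f; case: (Z2 (m 0 0)) (Z2 (m 0 1)) => e0 [] e1;
    rewrite e0 e1 ?mulr0n ?mulr1n ?addr0 ?add0r => /eqP;
    rewrite ?(negbTE u0) ?(negbTE v0) ?(negbTE uv0) // => _.
  apply/rowP => k; rewrite mxE; case: k => [[|[|//]] ?]; [rewrite -e0 | rewrite -e1].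
    by congr (m _ _); apply: val_inj.
  by congr (m _ _); apply: val_inj.
have f_inj : injective f.
  move=> m m' e; apply/eqP; rewrite -subr_eq0; apply/eqP/f_ker/(addIr (f m')).
  by rewrite -fD subrK e add0r.
have [g fK gK] : bijective f.
  apply: inj_card_bij f_inj _; rewrite card_mx card_ord.
  apply: leq_trans (card_size [:: 0; u; v; u + v]); apply/subset_leq_card/subsetP => x _.
  by have := inUV x; rewrite /= !inE -!orbA => /negbFE.
exists g; split; first by exists f.
by move=> x y; apply: f_inj; rewrite fD !gK.
Qed.

Lemma morph_add0 (G H : zmodType) (h : G -> H) : {morph h : x y / x + y} -> h 0 = 0.
Proof. by move=> hD; apply: (addrI (h 0)); rewrite -hD !addr0. Qed.

Section P0.
Variable G : finZmodType.
Implicit Types (S : {set G}) (X Y Z : P0 G) (y : G).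

Definition P0set S : P0 G := exist _ (0 |: S) (setU11 0 S).

Lemma val_P0add X Y : val (P0add X Y) = setadd (val X) (val Y).
Proof. by []. Qed.

Lemma val_P0set S : 0 \in S -> val (P0set S) = S.
Proof. by move=> S0; apply/setUidPr; rewrite sub1set. Qed.

Lemma P0_neq1 X : X != P0one G -> exists2 x, x \in val X & x != 0.
Proof.
move=> X1; case: (pickP [pred x in val X | x != 0]) => [x /andP[xX x0]|X0]; first by exists x.
case/eqP: X1; apply: val_inj; apply/setP => x /=; rewrite inE; apply/idP/eqP => [xX|->].
  by apply/eqP; move: (X0 x); rewrite /= xX => /negbFE.
exact: (valP X).
Qed.

Lemma aperiodicE X : aperiodic (val X) <-> (forall Y, P0add X Y = X -> Y = P0one G).
Proof.
split=> [aX Y /(congr1 val)/eqP|aX].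
  rewrite /= setadd_stabl ?(valP Y) // => /subset_trans/(_ aX) Y1.
  by apply/val_inj/eqP; rewrite eqEsubset Y1 sub1set (valP Y).
apply/subsetP => t tK; have /aX/(congr1 val)/= : P0add X (P0set [set t]) = X.
  apply: val_inj; apply/eqP; rewrite /= setadd_stabl ?setU11 //.
  by apply/subsetP => z; rewrite in_setU1 in_set1 => /predU1P[->|/eqP->] //; apply: stab0.
by move/setP/(_ t); rewrite !inE eqxx orbT.
Qed.

Definition P0full : P0 G := P0set setT.

Definition compl1 y : P0 G := P0set [set~ y].

Lemma compl1_inj : injective compl1.
Proof.
move=> a b /(congr1 val)/setP eab; apply/eqP; apply: contraT => ab.
have := eab a; have := eab b; rewrite !inE !eqxx !orbF ab (eq_sym b a) ab !orbT.
by move=> /esym/eqP b0 /eqP a0; rewrite a0 b0 eqxx in ab.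
Qed.

Lemma val_compl1 y : y != 0 -> val (compl1 y) = [set~ y].
Proof. by move=> y0; rewrite val_P0set // !inE eq_sym. Qed.

Lemma compl1_0 : compl1 0 = P0full.
Proof. by apply: val_inj; apply/setP => x; rewrite !inE; case: eqP. Qed.

Lemma P0addC : commutative (@P0add G).
Proof. by move=> X Y; apply: val_inj; rewrite /= setaddC. Qed.

Lemma P0add_full X : P0add X P0full = P0full.
Proof.
apply: val_inj; apply/setP => z; rewrite /= !inE orbT; apply/imset2P.
by exists 0 z; rewrite ?add0r ?inE ?orbT //; exact: (valP X).
Qed.

Definition fills X := forall Y, Y != P0one G -> P0add X Y = P0full.

Lemma fills_compl1 y : fills (compl1 y).
Proof.
move=> Y /P0_neq1[a aY a0]; apply: val_inj; apply/setP => z; rewrite /= !inE orbT.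
apply/imset2P; case: (eqVneq z y) => [->|zy].
  by exists (y - a) a; rewrite ?subrK // !inE addr_eql oppr_eq0 a0 orbT.
by exists z 0; rewrite ?addr0 ?(valP Y) // !inE zy orbT.
Qed.

Lemma fills_compl1_inv X : fills X -> exists y, X = compl1 y.
Proof.
move=> fX; case: (pickP [pred y | y \notin val X]) => [y /= yX|Xfull]; last first.
  exists 0; rewrite compl1_0; apply: val_inj; apply/setP => z; rewrite /= !inE orbT.
  by move: (Xfull z) => /= /negbFE.
exists y; apply: val_inj; apply/setP => z; rewrite /= !inE.
case: (eqVneq z y) => [->|zy]; rewrite ?orbF ?orbT.
  by rewrite (negbTE yX); apply/esym; apply: contraNF yX => /eqP->; exact: (valP X).
have Y1 : P0set [set y - z] != P0one G.
  apply/eqP => /(congr1 val)/setP/(_ (y - z)).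
  by rewrite !inE eqxx orbT subr_eq0 eq_sym (negbTE zy).
have /(congr1 val)/setP/(_ y) := fX _ Y1; rewrite /= !inE orbT => /imset2P[x e xX].
rewrite !inE => /predU1P[->|/eqP->] yxe; first by rewrite yxe addr0 xX in yX.
suff -> : z = x by [].
by apply: (addIr (y - z)); rewrite subrKC.
Qed.

Lemma notin_aperiodic X y : aperiodic (val X) -> y != 0 ->
  y \notin val X <-> exists Z, P0add X Z = compl1 y.
Proof.
move=> aX y0; split=> [yX|[Z /(congr1 val)]].
  exists (P0set (residual (val X) y)); apply: val_inj.
  by rewrite val_P0add val_P0set ?setU11 // setadd_residual // val_compl1.
rewrite val_P0add val_compl1 // => XZ; apply: contraT => /negbNE yX.
by have := mem_setadd yX (valP Z); rewrite addr0 XZ setC11.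
Qed.
End P0.

Arguments P0full {G}.

Section P0map.
Variables (G H : finZmodType) (h : G -> H).
Hypothesis hD : {morph h : x y / x + y}.

Definition P0map (X : P0 G) : P0 H := P0set (h @: val X).

Lemma val_P0map X : val (P0map X) = h @: val X.
Proof.
by rewrite val_P0set //; apply/imsetP; exists 0; rewrite ?(valP X) ?(morph_add0 hD).
Qed.

Lemma P0map_add : {morph P0map : X Y / P0add X Y}.
Proof. by move=> X Y; apply: val_inj; rewrite val_P0add !val_P0map imset_setadd. Qed.

Lemma P0map1 : P0map (P0one G) = P0one H.
Proof. by apply: val_inj; rewrite val_P0map /= imset_set1 (morph_add0 hD). Qed.

End P0map.

Lemma can_morph_add (G H : zmodType) (h : G -> H) (h' : H -> G) :
  {morph h : x y / x + y} -> cancel h h' -> cancel h' h -> {morph h' : x y / x + y}.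
Proof. by move=> hD hK hK' x y; rewrite -{1}(hK' x) -{1}(hK' y) -hD hK. Qed.

Lemma P0mapK (G : finZmodType) (h h' : G -> G) : {morph h : x y / x + y} ->
  cancel h h' -> cancel h' h -> cancel (P0map h) (P0map h').
Proof.
move=> hD hK hK' X; have h'D := can_morph_add hD hK hK'.
by apply: val_inj; rewrite !val_P0map // -imset_comp (eq_imset _ hK) imset_id.
Qed.

Section MonoidAutomorphism.
Variables (G : finZmodType) (phi phi' : P0 G -> P0 G).
Hypotheses (phiK : cancel phi phi') (phiK' : cancel phi' phi).
Hypotheses (phiD : {morph phi : X Y / P0add X Y}) (phi1 : phi (P0one G) = P0one G).

Let phi_inj : injective phi := can_inj phiK.

Lemma phi'D : {morph phi' : X Y / P0add X Y}.
Proof. by move=> X Y; apply: phi_inj; rewrite phiD !phiK'. Qed.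

Lemma phi_full : phi P0full = P0full.
Proof. by rewrite -{1}(P0add_full (phi' P0full)) phiD phiK' P0addC P0add_full. Qed.

Lemma fills_phi X : fills X -> fills (phi X).
Proof.
move=> fX Y Y1; rewrite -(phiK' Y) -phiD fX ?phi_full //.
by apply: contra_neq Y1 => Y1; rewrite -(phiK' Y) Y1 phi1.
Qed.

Definition pointmap y := odflt 0 [pick s | phi (compl1 y) == compl1 s].

Lemma phi_compl1 y : phi (compl1 y) = compl1 (pointmap y).
Proof.
have [s e] := fills_compl1_inv (fills_phi (fills_compl1 y)).
by rewrite /pointmap; case: pickP => [s' /eqP //|/(_ s)]; rewrite e eqxx.
Qed.

Lemma pointmap_inj : injective pointmap.
Proof. by move=> x y e; apply/compl1_inj/phi_inj; rewrite !phi_compl1 e. Qed.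

Lemma pointmap_bij : bijective pointmap.
Proof. exact: injF_bij pointmap_inj. Qed.

Lemma pointmap0 : pointmap 0 = 0.
Proof. by apply: compl1_inj; rewrite -phi_compl1 compl1_0 phi_full. Qed.

Lemma pointmap_eq0 y : (pointmap y == 0) = (y == 0).
Proof. by rewrite -{1}pointmap0 (inj_eq pointmap_inj). Qed.

Lemma phi'_compl1 y : phi' (compl1 (pointmap y)) = compl1 y.
Proof. by rewrite -phi_compl1 phiK. Qed.

Lemma aperiodic_phi X : aperiodic (val X) -> aperiodic (val (phi X)).
Proof.
move/aperiodicE=> aX; apply/aperiodicE => Y XY.
by rewrite -(phiK' Y) (aX (phi' Y)) ?phi1 //; apply: phi_inj; rewrite phiD phiK'.
Qed.

Lemma phi_aperiodic X : aperiodic (val X) -> val (phi X) = pointmap @: val X.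
Proof.
move=> aX; have aX' := aperiodic_phi aX.
have memX x : (pointmap x \in val (phi X)) = (x \in val X).
  case: (eqVneq x 0) => [->|x0]; first by rewrite pointmap0 (valP X) (valP (phi X)).
  have sx0 : pointmap x != 0 by rewrite pointmap_eq0.
  apply/idP/idP; apply: contraLR.
    move/(notin_aperiodic aX x0) => [Z XZ]; apply/(notin_aperiodic aX' sx0).
    by exists (phi Z); rewrite -phiD XZ phi_compl1.
  move/(notin_aperiodic aX' sx0) => [Z XZ]; apply/(notin_aperiodic aX x0).
  by exists (phi' Z); rewrite -(phiK X) -phi'D XZ phi'_compl1.
have [pointmap' _ pointmapK'] := pointmap_bij.
by apply/setP => w; rewrite -(pointmapK' w) (mem_imset _ _ pointmap_inj) memX.
Qed.

Lemma pointmap_sub_witness (A : P0 G) a y : aperiodic (val A) ->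
  a \in val A -> a != 0 -> y \notin val A ->
  exists2 a', (a' \in val A) && (a' != 0) & pointmap (y - a') = pointmap y - pointmap a.
Proof.
move=> aA aA_a a0 yA; have y0 : y != 0 by apply: contraNneq yA => ->; apply: (valP A).
pose Z := P0set (residual (val A) y).
have AZ : setadd (val A) (val Z) = [set~ y].
  by rewrite val_P0set ?setU11 // setadd_residual.
have aZ : aperiodic (val Z).
  by apply: (aperiodic_setaddr (A := val A)); rewrite AZ aperiodic_setC1.
have /(congr1 (fun X => val (phi X))) : P0add A Z = compl1 y.
  by apply: val_inj; rewrite val_P0add AZ val_compl1.
rewrite phiD val_P0add (phi_aperiodic aA) (phi_aperiodic aZ) phi_compl1.
rewrite val_compl1 ?pointmap_eq0 // => sAZ.
have [pointmap' _ sK'] := pointmap_bij; pose w := pointmap' (pointmap y - pointmap a).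
have sw : pointmap w = pointmap y - pointmap a by rewrite sK'.
have wZ : w \notin val Z.
  apply: contraT => /negbNE wZ.
  have := mem_setadd (imset_f pointmap aA_a) (imset_f pointmap wZ).
  by rewrite sAZ sw subrKC setC11.
exists (y - w); last by rewrite opprB subrKC.
move: wZ; rewrite val_P0set ?setU11 // !inE negb_or negbK => /andP[_ ->].
rewrite subr_eq0; apply: contra a0 => /eqP yw.
by rewrite -pointmap_eq0 -oppr_eq0 -(addr_eql (pointmap y)) -sw -yw.
Qed.

Lemma pointmapB_aperiodic_pair a y : a + a != 0 -> y \notin [set 0; a] ->
  pointmap (y - a) = pointmap y - pointmap a.
Proof.
move=> aa yA; have a0 : a != 0 by apply: contraNneq aa => ->; rewrite addr0.
have [|a' aA' <-] := @pointmap_sub_witness (P0set [set a]) a y (aperiodic2 aa) _ a0 yA.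
  by rewrite !inE eqxx orbT.
by move: aA'; rewrite !inE => /andP[/orP[]/eqP-> //]; rewrite eqxx.
Qed.

Lemma pointmapN_double_neq0 a : a + a != 0 -> pointmap (- a) = - pointmap a.
Proof.
move=> aa; have a0 : a != 0 by apply: contraNneq aa => ->; rewrite addr0.
have saa : pointmap (a + a) = pointmap a + pointmap a.
  have aaA : a + a \notin [set 0; a] by rewrite !inE negb_or aa addr_eql.
  by have := pointmapB_aperiodic_pair aa aaA; rewrite addrK => {1}->; rewrite subrK.
have aNaN : - a + - a != 0 by rewrite -opprD oppr_eq0.
have aNA : a \notin [set 0; - a] by rewrite !inE negb_or a0 -addr_eq0.
have := pointmapB_aperiodic_pair aNaN aNA; rewrite opprK saa => /addrI ->.
by rewrite opprK.
Qed.

Lemma pointmapB_double_neq0 a y : a + a != 0 ->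
  pointmap (y - a) = pointmap y - pointmap a.
Proof.
move=> aa; case: (eqVneq y 0) => [->|y0].
  by rewrite pointmap0 !sub0r pointmapN_double_neq0.
case: (eqVneq y a) => [->|ya]; first by rewrite !subrr pointmap0.
by apply: pointmapB_aperiodic_pair; rewrite // !inE negb_or y0.
Qed.

Lemma pointmapB_exists_double_neq0 (b : G) :
  b + b != 0 -> {morph pointmap : x y / x - y}.
Proof.
move=> bb y x; case: (eqVneq (x + x) 0) => xx; last exact: pointmapB_double_neq0.
have sDb z : pointmap (z + b) = pointmap z + pointmap b.
  by rewrite -{2}(addrK b z) pointmapB_double_neq0 // subrK.
rewrite -(addrKA b y x) pointmapB_double_neq0; last by rewrite addrACA xx addr0.
by rewrite [b + x]addrC !sDb [pointmap x + _]addrC addrKA.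
Qed.

Lemma pointmapB_2torsion :
  ~ group_isomorphic G Klein4 -> (forall x : G, x + x = 0) -> {morph pointmap : x y / x - y}.
Proof.
move=> notK G2 y a; have N (z : G) : - z = z by apply/eqP; rewrite eq_sym -addr_eq0 G2.
case: (eqVneq a 0) => [->|a0]; first by rewrite pointmap0 !subr0.
case: (eqVneq y 0) => [->|y0]; first by rewrite pointmap0 !sub0r !N.
case: (eqVneq y a) => [->|ya]; first by rewrite !subrr pointmap0.
have via_triple c : c \notin [set 0; a; y] -> pointmap (y - a) = pointmap y - pointmap a
    \/ pointmap (y - c) = pointmap y - pointmap a.
  rewrite !inE !negb_or => /andP[/andP[c0 ca] cy].
  have ac : a + c \notin [set 0; a; c].
    rewrite !inE addr_eql addr_eqr addr_eq0 N (eq_sym a).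
    by rewrite (negbTE ca) (negbTE c0) (negbTE a0).
  have [|||a' aA' <-] := @pointmap_sub_witness (P0set [set a; c]) a y _ _ a0.
  - by rewrite /= setUA aperiodic3.
  - by rewrite !inE eqxx orbT.
  - by rewrite !inE !negb_or y0 ya eq_sym cy.
  move: aA'; rewrite !inE => /andP[/or3P[]/eqP-> a'0]; first by rewrite eqxx in a'0.
    by left.
  by right.
have ay : a + y \notin [set 0; a; y].
  rewrite !inE addr_eql addr_eqr addr_eq0 N (eq_sym a).
  by rewrite (negbTE ya) (negbTE y0) (negbTE a0).
have [//|] := via_triple _ ay; have -> : y - (a + y) = a by rewrite opprD addrCA subrr addr0 N.
move=> saya; have [|c cN] := Klein4_witness notK (G2 a) (G2 y) a0 y0; first by rewrite eq_sym.
have cN3 : c \notin [set 0; a; y] by move: cN; rewrite !inE !negb_or => /andP[].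
have [//|yca] := via_triple c cN3.
move: cN; rewrite !inE; suff -> : c == a + y by rewrite orbT.
by rewrite -(pointmap_inj (etrans yca (esym saya))) addrAC G2 sub0r N.
Qed.

Lemma pointmapB : ~ group_isomorphic G Klein4 -> {morph pointmap : x y / x - y}.
Proof.
move=> notK; case: (pickP [pred b : G | b + b != 0]) => [b /= bb|G2].
  exact: pointmapB_exists_double_neq0 bb.
apply: (pointmapB_2torsion notK) => x; apply/eqP.
by move/negbFE: (G2 x).
Qed.

Lemma pointmapD : ~ group_isomorphic G Klein4 -> {morph pointmap : x y / x + y}.
Proof.
move=> notK x y; have sB := pointmapB notK.
have sN z : pointmap (- z) = - pointmap z by rewrite -sub0r sB pointmap0 sub0r.
by rewrite -{1}[y]opprK sB sN opprK.
Qed.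
End MonoidAutomorphism.

Section FixingAperiodic.
Variables (G : finZmodType) (psi : P0 G -> P0 G).
Hypotheses (notK : ~ group_isomorphic G Klein4) (psi_inj : injective psi).
Hypotheses (psiD : {morph psi : X Y / P0add X Y})
  (psi_aperiodic : forall A, aperiodic (val A) -> psi A = A).

Lemma fix_aperiodic1 : psi (P0one G) = P0one G.
Proof. by apply: psi_aperiodic; apply: stab_sub; rewrite set11. Qed.

Lemma fix_aperiodic_order2 k s : k != 0 -> k + k = 0 -> s + s = 0 ->
  psi (P0set [set k]) = P0set [set s] -> s = k.
Proof.
move=> k0 kk ss psiK; apply/eqP; apply: contraT => sk.
have s0 : s != 0.
  apply: contra_neq k0 => s0; have : psi (P0set [set k]) = psi (P0one G).
    by rewrite fix_aperiodic1 psiK s0; apply: val_inj; rewrite /= setUid.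
  by move/psi_inj/(congr1 val)/setP/(_ k); rewrite !inE eqxx orbT => /esym/eqP.
have [|a aN] := Klein4_witness notK kk ss k0 s0; first by rewrite eq_sym.
move: (aN); rewrite !inE !negb_or => /andP[/andP[/andP[a0 ak] as_] aks].
have ak0 : a + k != 0 by rewrite -kk (inj_eq (addIr k)).
have aperA : aperiodic [set 0; a; k].
  by apply: aperiodic3; rewrite !inE addr_eql addr_eqr (negbTE ak0) (negbTE k0) (negbTE a0).
have aperB : aperiodic [set 0; a + k; k].
  apply: aperiodic3; rewrite -addrA kk addr0 !inE (negbTE a0) eq_sym addr_eql (negbTE k0).
  by rewrite (negbTE ak).
have AKB : P0add (P0set [set a; k]) (P0set [set k])
          = P0add (P0set [set a + k; k]) (P0set [set k]).
  apply: val_inj; rewrite !val_P0add /= !setUA !setadd_set3_set2 -addrA kk addr0.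
  apply/setP => z; rewrite !inE.
  by case: (z == 0); case: (z == a); case: (z == k); case: (z == a + k).
have psiA : psi (P0set [set a; k]) = P0set [set a; k].
  by apply: psi_aperiodic; rewrite /= setUA.
have psiB : psi (P0set [set a + k; k]) = P0set [set a + k; k].
  by apply: psi_aperiodic; rewrite /= setUA.
have /(congr1 val)/setP/(_ a) := congr1 psi AKB.
rewrite !psiD psiA psiB psiK !val_P0add /= !setUA !setadd_set3_set2 !inE.
have aak : (a == a + k) = false by rewrite eq_sym addr_eql (negbTE k0).
have aaks : (a == a + k + s) = false.
  by rewrite eq_sym -addrA addr_eql -kk (inj_eq (addrI k)) (negbTE sk).
by rewrite eqxx orbT (negbTE a0) aak aaks (negbTE ak) (negbTE as_) (negbTE aks).
Qed.

Lemma fix_aperiodic_idem K : P0add K K = K -> psi K = K.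
Proof.
move=> KK; have KKv : setadd (val K) (val K) = val K := congr1 val KK.
have SSv : setadd (val (psi K)) (val (psi K)) = val (psi K).
  by rewrite -val_P0add -psiD KK.
have sub_iff (A : {set G}) :
    0 \in A -> aperiodic A -> (A \subset val K) = (A \subset val (psi K)).
  move=> A0 aA; have aA' : aperiodic (val (P0set A)) by rewrite val_P0set.
  rewrite -(stab_idem (valP K) KKv) -(stab_idem (valP (psi K)) SSv).
  rewrite -[A](val_P0set A0) -!setadd_stabl ?(valP (P0set A)) //.
  rewrite -!val_P0add !(inj_eq val_inj).
  by rewrite -{2}(psi_aperiodic aA') -psiD (inj_eq psi_inj).
have KS : (2 < #|val K|)%N -> val K \subset val (psi K).
  move=> cK; apply: idem_sub_of_aperiodic (valP K) KKv cK _ => A A0 aA.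
  by rewrite sub_iff.
have SK : (2 < #|val (psi K)|)%N -> val (psi K) \subset val K.
  move=> cS; apply: idem_sub_of_aperiodic (valP (psi K)) SSv cS _ => A A0 aA.
  by rewrite sub_iff.
case: (ltnP 2 #|val K|) => cK; case: (ltnP 2 #|val (psi K)|) => cS.
- by apply: val_inj; apply/eqP; rewrite eqEsubset KS ?SK.
- by have := leq_trans (subset_leq_card (KS cK)) cS; rewrite leqNgt cK.
- by have := leq_trans (subset_leq_card (SK cS)) cK; rewrite leqNgt cS.
have [k [eK kk]] := idem_card_le2 (valP K) KKv cK.
have [s [eS ss]] := idem_card_le2 (valP (psi K)) SSv cS.
have eK' : K = P0set [set k] by apply: val_inj.
case: (eqVneq k 0) => [k0|k0].
  by rewrite (_ : K = P0one G) ?fix_aperiodic1 //; apply: val_inj; rewrite eK k0 setUid.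
have psiK : psi (P0set [set k]) = P0set [set s] by rewrite -eK'; apply: val_inj.
by rewrite eK' psiK (fix_aperiodic_order2 k0 kk ss psiK).
Qed.

Lemma fix_aperiodic_id X : psi X = X.
Proof.
have X0 := valP X; pose A := P0set (aperiodic_part (val X)); pose K := P0set (stab (val X)).
have aA : aperiodic (val A) by rewrite val_P0set ?setU11 // aperiodic_aperiodic_part.
have KK : P0add K K = K by apply: val_inj; rewrite val_P0add val_P0set ?stab0 // setadd_stab.
have -> : X = P0add A K.
  by apply: val_inj; rewrite val_P0add !val_P0set ?setU11 ?stab0 // setadd_aperiodic_part.
by rewrite psiD psi_aperiodic // fix_aperiodic_idem.
Qed.

End FixingAperiodic.

Lemma group_aut_imset_inj (G : finZmodType) (h h' : G -> G) :
  group_aut h -> group_aut h' -> (forall X : P0 G, h @: val X = h' @: val X) -> h = h'.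
Proof.
move=> [/bij_inj h_inj /morph_add0 h0] [_ /morph_add0 h'0] hh'.
apply: functional_extensionality => x.
case: (eqVneq x 0) => [->|x0]; first by rewrite h0 h'0.
have /setP/(_ (h x)) := hh' (P0set [set x]).
rewrite !imsetU1 !imset_set1 h0 h'0 !inE eqxx orbT.
by rewrite -h0 (inj_eq h_inj) (negbTE x0) => /esym/eqP.
Qed.

Lemma group_aut_P0map (G : finZmodType) (h : G -> G) : group_aut h ->
  P0_monoid_aut (P0map h) /\ forall X, val (P0map h X) = h @: val X.
Proof.
case=> [[h' hK hK'] hD]; split; last exact: val_P0map.
split; [exists (P0map h'); apply: P0mapK | exact: P0map_add | exact: P0map1] => //.
exact: can_morph_add hD hK hK'.
Qed.

Lemma P0_monoid_aut_induced (G : finZmodType) (phi : P0 G -> P0 G) :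
  ~ group_isomorphic G Klein4 -> P0_monoid_aut phi ->
  exists h, group_aut h /\ forall X, val (phi X) = h @: val X.
Proof.
move=> notK [[phi' phiK phiK'] phiD phi1]; pose s := pointmap phi.
have sD : {morph s : x y / x + y} := pointmapD phiK phiK' phiD phi1 notK.
have [s' sK sK'] : bijective s := pointmap_bij phiK phiK' phiD phi1.
have s'D := can_morph_add sD sK sK'.
exists s; split=> [|X]; first by split=> //; exists s'.
pose psi X := P0map s' (phi X).
have psi_inj : injective psi.
  by apply: (can_inj (g := phi' \o P0map s)) => Y; rewrite /psi /= P0mapK.
have psiD : {morph psi : X Y / P0add X Y} by move=> Y Z; rewrite /psi phiD P0map_add.
have psi_aperiodic A : aperiodic (val A) -> psi A = A.
  move=> aA; apply: val_inj; rewrite val_P0map // (phi_aperiodic phiK phiK' phiD phi1 aA).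
  by rewrite -imset_comp (eq_imset _ sK) imset_id.
rewrite -val_P0map // -{2}(fix_aperiodic_id notK psi_inj psiD psi_aperiodic X).
by rewrite /psi (P0mapK s'D sK' sK).
Qed.

(* The canonical map h |-> F_h, F_h(X) = h(X), is a bijection
   Aut(G) -> Aut(P_0(G)) (it is clearly a group homomorphism). *)
Theorem theorem3p7 (G : finZmodType) :
  ~ group_isomorphic G Klein4 ->
  (forall h : G -> G, group_aut h ->
     exists phi : P0 G -> P0 G,
       P0_monoid_aut phi /\ forall X : P0 G, val (phi X) = h @: val X) /\
  (forall phi : P0 G -> P0 G, P0_monoid_aut phi ->
     exists! h : G -> G,
       group_aut h /\ forall X : P0 G, val (phi X) = h @: val X).
Proof.
move=> notK; split=> [h /group_aut_P0map hP0|phi].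
  by exists (P0map h).
move=> /(P0_monoid_aut_induced notK)[h [hA phiE]].
exists h; split=> // h' [h'A phi'E].
by apply: group_aut_imset_inj => // X; rewrite -phiE phi'E.
Qed.
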